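(* For every $\varepsilon>0$ there exist $C>0$ and $\varepsilon'>0$ such that for all integers $n,m\ge1$, $$\#\mathcal F^{n,m}(\varepsilon)\le C\,2^{\varepsilon' n};$$ moreover $\varepsilon'$ can be chosen so that $\varepsilon'\to0$ as $\varepsilon\to0$.
   Context: For $\varepsilon>0$ and $k\ge1$, $\mathcal F_k(\varepsilon)$ is the set of pairs of sequences of positive integers $(i_1i_2\cdots i_k;\,j_1j_2\cdots j_k)$ with $i_1<\dots<i_k$ such that: (i) $i_{l+1}-i_l\ge j_l$ for each $1\le l<k$; (ii) $k\le\varepsilon i_k$; (iii) $i_k-\sum_{1\le l<k}j_l\le\varepsilon i_k$. $\mathcal F_k^{n,m}(\varepsilon)$ is the set of elements of $\mathcal F_k(\varepsilon)$ with $i_k=n$ and $j_k=m$, and $\mathcal F^{n,m}(\varepsilon)=\bigcup_{k=1}^n\mathcal F_k^{n,m}(\varepsilon)$. *)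

From Stdlib Require Import Reals List Arith.
Import ListNotations.
Open Scope R_scope.

(* Indexing: the paper's i_l, j_l (1 <= l <= k) are [nth (l-1) is 0], [nth (l-1) js 0]. *)

Definition sum_first (k : nat) (js : list nat) : nat :=
  fold_right Nat.add 0%nat (firstn k js).

Definition inFk (eps : R) (k : nat) (p : list nat * list nat) : Prop :=
  let (is, js) := p in
  (1 <= k)%nat /\
  length is = k /\ length js = k /\
  (forall l, (l < k)%nat -> (0 < nth l is 0%nat)%nat /\ (0 < nth l js 0%nat)%nat) /\
  (forall l, (l + 1 < k)%nat -> (nth l is 0%nat < nth (l + 1) is 0%nat)%nat) /\
  (forall l, (l + 1 < k)%nat -> (nth l is 0%nat + nth l js 0%nat <= nth (l + 1) is 0%nat)%nat) /\
  INR k <= eps * INR (nth (k - 1) is 0%nat) /\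
  (* (iii) i_k - sum_{l<k} j_l <= eps * i_k  (real subtraction) *)
  INR (nth (k - 1) is 0%nat) - INR (sum_first (k - 1) js) <= eps * INR (nth (k - 1) is 0%nat).

Definition inFknm (eps : R) (k n m : nat) (p : list nat * list nat) : Prop :=
  inFk eps k p /\ nth (k - 1) (fst p) 0%nat = n /\ nth (k - 1) (snd p) 0%nat = m.

Definition inFnm (eps : R) (n m : nat) (p : list nat * list nat) : Prop :=
  exists k, (1 <= k <= n)%nat /\ inFknm eps k n m p.

From Stdlib Require Import Reals List Sorted Lia Lra.
Import ListNotations.
Open Scope R_scope.

(* An element (i_1 .. i_k ; j_1 .. j_k) of F^{n,m}(eps) is determined by the
   increasing sequence i_1 < .. < i_k <= n together with the increasing
   sequence of block ends i_l + j_l (l < k), because j_k = m.  By (ii) both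
   have fewer than K ~ eps n + 1 terms, and for every 0 < x <= 1 the number of
   increasing sequences in [1, n] of length at most K is at most
   (1 + x)^n x^(-K).  With x = min(eps, 1) this is, up to a constant factor,
   exp (n (x + eps ln (1/x))) <= exp (3 sqrt(eps) n). *)

Fixpoint increasing_lists (lo N K : nat) : list (list nat) :=
  match N with
  | O => [[]]
  | S N' => increasing_lists (S lo) N' K ++
      match K with
      | O => []
      | S K' => map (cons lo) (increasing_lists (S lo) N' K')
      end
  end.

Lemma in_increasing_lists (N : nat) : forall lo K l,
  StronglySorted lt l -> (forall a, In a l -> lo <= a < lo + N)%nat ->
  (length l <= K)%nat -> In l (increasing_lists lo N K).
Proof.
  induction N as [|N IH]; intros lo K l Hsorted Hrange Hlen.
  - destruct l as [|a l]; [now left|].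
    specialize (Hrange a (or_introl eq_refl)); lia.
  - simpl; apply in_or_app.
    destruct l as [|a l]; [left; apply IH; simpl; auto; tauto|].
    destruct (StronglySorted_inv Hsorted) as [Htail Hhead].
    rewrite Forall_forall in Hhead.
    assert (Ha := Hrange a (or_introl eq_refl)).
    destruct (Nat.eq_dec a lo) as [->|Hne].
    + right; destruct K as [|K]; [simpl in Hlen; lia|].
      apply in_map, IH; [exact Htail| |simpl in Hlen; lia].
      intros b Hb; specialize (Hhead b Hb); specialize (Hrange b (or_intror Hb)); lia.
    + left; apply IH; [exact Hsorted| |exact Hlen].
      intros b [<-|Hb]; [lia|].
      specialize (Hhead b Hb); specialize (Hrange b (or_intror Hb)); lia.
Qed.

(* The generating-function bound: sum_{k <= K} C(N, k) <= (1 + x)^N / x^K. *)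
Lemma length_increasing_lists_le (x : R) : 0 < x <= 1 -> forall N lo K,
  INR (length (increasing_lists lo N K)) <= (1 + x) ^ N * (/ x) ^ K.
Proof.
  intros Hx N; induction N as [|N IH]; intros lo K.
  - simpl; rewrite Rmult_1_l; apply pow_R1_Rle.
    rewrite <- Rinv_1; apply Rinv_le_contravar; lra.
  - simpl; rewrite length_app, plus_INR.
    assert (Hpow : 0 <= (1 + x) ^ N) by (apply pow_le; lra).
    assert (Hinv : 1 <= / x) by (rewrite <- Rinv_1; apply Rinv_le_contravar; lra).
    destruct K as [|K]; simpl.
    + specialize (IH (S lo) O); simpl in IH; nra.
    + rewrite length_map.
      assert (Hstay := IH (S lo) (S K)); assert (Hdrop := IH (S lo) K); simpl in Hstay.
      assert (Hsplit : (1 + x) * (1 + x) ^ N * (/ x * (/ x) ^ K) =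
                       (1 + x) ^ N * (/ x * (/ x) ^ K) + (1 + x) ^ N * (/ x) ^ K)
        by (field; lra).
      lra.
Qed.

Definition nth_increasing (l : list nat) : Prop :=
  forall i, (S i < length l)%nat -> (nth i l 0 < nth (S i) l 0)%nat.

Lemma nth_increasing_lt (l : list nat) : nth_increasing l ->
  forall i j, (i < j < length l)%nat -> (nth i l 0 < nth j l 0)%nat.
Proof.
  intros Hinc i j; induction j as [|j IH]; intros Hij; [lia|].
  specialize (Hinc j ltac:(lia)).
  destruct (Nat.eq_dec i j) as [->|Hne]; [assumption|].
  specialize (IH ltac:(lia)); lia.
Qed.

Lemma nth_increasing_StronglySorted (l : list nat) :
  nth_increasing l -> StronglySorted lt l.
Proof.
  induction l as [|a l IH]; intros Hinc; constructor.
  - apply IH; intros i Hi; apply (Hinc (S i)); simpl; lia.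
  - apply Forall_forall; intros b Hb.
    destruct (In_nth l b 0%nat Hb) as [j [Hj <-]].
    apply (nth_increasing_lt (a :: l) Hinc 0 (S j)); simpl; lia.
Qed.

Definition block_ends (is js : list nat) : list nat :=
  map (fun l => nth l is 0 + nth l js 0)%nat (seq 0 (length is - 1)).

Lemma length_block_ends is js : length (block_ends is js) = (length is - 1)%nat.
Proof. unfold block_ends; now rewrite length_map, length_seq. Qed.

Lemma nth_block_ends is js l : (l < length is - 1)%nat ->
  nth l (block_ends is js) 0%nat = (nth l is 0 + nth l js 0)%nat.
Proof.
  intros Hl; unfold block_ends.
  set (f := fun l => (nth l is 0 + nth l js 0)%nat).
  rewrite nth_indep with (d' := f 0%nat) by now rewrite length_map, length_seq.
  now rewrite map_nth, seq_nth.
Qed.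

Section ElementsOfF.

Variables (eps : R) (n m : nat) (is js : list nat).
Hypothesis Hin : inFnm eps n m (is, js).

Lemma inFnm_inv :
  (1 <= length is)%nat /\ length js = length is /\
  (forall l, (l < length is)%nat -> (0 < nth l is 0)%nat /\ (0 < nth l js 0)%nat) /\
  (forall l, (S l < length is)%nat -> (nth l is 0 + nth l js 0 <= nth (S l) is 0)%nat) /\
  nth (length is - 1) is 0%nat = n /\ nth (length is - 1) js 0%nat = m /\
  INR (length is) <= eps * INR n.
Proof.
  destruct Hin as [k [_ [[Hk [Hlis [Hljs [Hpos [_ [Hgap [Hii _]]]]]]] [Hn Hm]]]].
  simpl in *; subst k.
  repeat split; auto; try now apply Hpos.
  - intros l Hl; rewrite <- Nat.add_1_r; apply Hgap; lia.
  - now rewrite <- Hn.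
Qed.

Lemma inFnm_nth_increasing : nth_increasing is.
Proof.
  destruct inFnm_inv as [_ [_ [Hpos [Hgap _]]]].
  intros l Hl; specialize (Hgap l Hl); specialize (Hpos l ltac:(lia)); lia.
Qed.

Lemma inFnm_nth_le l : (l < length is)%nat -> (nth l is 0 <= n)%nat.
Proof.
  destruct inFnm_inv as [Hk [_ [_ [_ [Hn _]]]]]; intros Hl; rewrite <- Hn.
  destruct (Nat.eq_dec l (length is - 1)) as [->|Hne]; [lia|].
  apply Nat.lt_le_incl, nth_increasing_lt; [apply inFnm_nth_increasing|lia].
Qed.

Lemma inFnm_in_increasing_lists K :
  eps * INR n < INR K -> In is (increasing_lists 1 n K).
Proof.
  destruct inFnm_inv as [_ [_ [Hpos [_ [_ [_ Hii]]]]]]; intros HK.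
  apply in_increasing_lists.
  - apply nth_increasing_StronglySorted, inFnm_nth_increasing.
  - intros a Ha; destruct (In_nth is a 0%nat Ha) as [l [Hl <-]].
    specialize (Hpos l Hl); specialize (inFnm_nth_le l Hl); lia.
  - apply Nat.lt_le_incl, INR_lt; lra.
Qed.

Lemma inFnm_block_ends_in_increasing_lists K :
  eps * INR n < INR K -> In (block_ends is js) (increasing_lists 1 n K).
Proof.
  destruct inFnm_inv as [_ [_ [Hpos [Hgap [_ [_ Hii]]]]]]; intros HK.
  assert (Hk : (length is < K)%nat) by (apply INR_lt; lra).
  apply in_increasing_lists; rewrite ?length_block_ends; [| |lia].
  - apply nth_increasing_StronglySorted; intros l Hl.
    rewrite length_block_ends in Hl; rewrite !nth_block_ends by lia.
    specialize (Hgap l ltac:(lia)); specialize (Hpos (S l) ltac:(lia)); lia.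
  - intros a Ha; destruct (In_nth _ a 0%nat Ha) as [l [Hl <-]].
    rewrite length_block_ends in Hl; rewrite nth_block_ends by lia.
    specialize (Hgap l ltac:(lia)); specialize (Hpos l ltac:(lia)).
    specialize (inFnm_nth_le (S l) ltac:(lia)); lia.
Qed.

End ElementsOfF.

Lemma inFnm_block_ends_inj eps n m is js js' :
  inFnm eps n m (is, js) -> inFnm eps n m (is, js') ->
  block_ends is js = block_ends is js' -> js = js'.
Proof.
  intros Hp Hq Hends.
  destruct (inFnm_inv _ _ _ _ _ Hp) as [_ [Hlen [_ [_ [_ [Hm _]]]]]].
  destruct (inFnm_inv _ _ _ _ _ Hq) as [_ [Hlen' [_ [_ [_ [Hm' _]]]]]].
  apply nth_ext with (d := 0%nat) (d' := 0%nat); [congruence|].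
  intros l Hl; rewrite Hlen in Hl.
  destruct (Nat.eq_dec l (length is - 1)) as [->|Hne]; [congruence|].
  assert (Hl' : (l < length is - 1)%nat) by lia.
  assert (E := nth_block_ends is js l Hl'); rewrite Hends, nth_block_ends in E by lia.
  lia.
Qed.

Lemma length_inFnm_list_le eps n m K s :
  NoDup s -> (forall p, In p s -> inFnm eps n m p) -> eps * INR n < INR K ->
  (length s <= length (increasing_lists 1 n K) * length (increasing_lists 1 n K))%nat.
Proof.
  intros Hnodup Hs HK.
  set (encode := fun p : list nat * list nat => (fst p, block_ends (fst p) (snd p))).
  rewrite <- (length_map encode s), <- length_prod.
  apply NoDup_incl_length.
  - apply NoDup_map_NoDup_ForallPairs; [|assumption].
    intros [is js] [is' js'] Hp Hq Heq; injection Heq as <- Hends.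
    f_equal; exact (inFnm_block_ends_inj _ _ _ _ _ _ (Hs _ Hp) (Hs _ Hq) Hends).
  - intros q Hq; apply in_map_iff in Hq as [[is js] [<- Hp]].
    apply in_prod.
    + exact (inFnm_in_increasing_lists _ _ _ _ _ (Hs _ Hp) K HK).
    + exact (inFnm_block_ends_in_increasing_lists _ _ _ _ _ (Hs _ Hp) K HK).
Qed.

Lemma exp_le_exp x y : x <= y -> exp x <= exp y.
Proof. intros [Hlt|<-]; [left; now apply exp_increasing|lra]. Qed.

Lemma pow_one_plus_le_exp x N : 0 <= x -> (1 + x) ^ N <= exp (INR N * x).
Proof.
  intros Hx; apply Rle_trans with (exp x ^ N).
  - apply pow_incr; split; [lra|apply exp_ineq1_le].
  - rewrite <- Rpower_pow by apply exp_pos; unfold Rpower; rewrite ln_exp; lra.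
Qed.

(* From 1 + ln (/t) <= exp (ln (/t)) = /t. *)
Lemma mul_ln_inv_le_1 t : 0 < t -> t * ln (/ t) <= 1.
Proof.
  intros Ht.
  assert (Hexp := exp_ineq1_le (ln (/ t))).
  rewrite exp_ln in Hexp by now apply Rinv_0_lt_compat.
  apply Rmult_le_compat_l with (r := t) in Hexp; [|lra].
  rewrite Rinv_r in Hexp by lra; nra.
Qed.

Lemma Rmin_plus_mul_ln_inv_le eps : 0 < eps ->
  Rmin eps 1 + eps * ln (/ Rmin eps 1) <= 3 * sqrt eps.
Proof.
  intros He; destruct (Rle_dec eps 1) as [Hle|Hgt].
  - rewrite Rmin_left by assumption.
    set (t := sqrt eps).
    assert (Ht : 0 < t) by now apply sqrt_lt_R0.
    assert (Htt : t * t = eps) by (apply sqrt_sqrt; lra).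
    assert (Ht1 : t <= 1) by (rewrite <- sqrt_1; now apply sqrt_le_1_alt).
    assert (Hln : ln (/ eps) = 2 * ln (/ t)).
    { rewrite <- Htt, Rinv_mult, ln_mult by (apply Rinv_0_lt_compat; lra); ring. }
    (* eps + eps ln (/eps) = t^2 + 2 t (t ln (/t)) <= t + 2 t *)
    assert (Hkey := mul_ln_inv_le_1 t Ht).
    rewrite Hln, <- Htt; nra.
  - rewrite Rmin_right, Rinv_1, ln_1 by lra.
    assert (1 <= sqrt eps) by (rewrite <- sqrt_1; apply sqrt_le_1_alt; lra); lra.
Qed.

Lemma length_increasing_lists_le_exp eps N K : 0 < eps -> INR K <= eps * INR N + 1 ->
  INR (length (increasing_lists 1 N K)) <= / Rmin eps 1 * exp (3 * sqrt eps * INR N).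
Proof.
  intros He HK.
  set (x := Rmin eps 1).
  assert (Hx : 0 < x <= 1) by (unfold x; split; [apply Rmin_glb_lt; lra|apply Rmin_r]).
  assert (Hinv : 1 <= / x) by (rewrite <- Rinv_1; apply Rinv_le_contravar; lra).
  eapply Rle_trans; [now apply length_increasing_lists_le|].
  assert (Hpow : (/ x) ^ K <= / x * exp (eps * INR N * ln (/ x))).
  { rewrite <- Rpower_pow by lra.
    apply Rle_trans with (Rpower (/ x) (eps * INR N + 1)); [now apply Rle_Rpower|].
    rewrite Rpower_plus, Rpower_1 by lra; unfold Rpower at 1; lra. }
  eapply Rle_trans.
  { apply Rmult_le_compat; [apply pow_le; lra|apply pow_le; lra| |exact Hpow].
    apply pow_one_plus_le_exp; lra. }
  assert (Hexp : exp (INR N * x) * exp (eps * INR N * ln (/ x)) <= exp (3 * sqrt eps * INR N)).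
  { rewrite <- exp_plus; apply exp_le_exp.
    assert (Hsqrt := Rmin_plus_mul_ln_inv_le eps He); fold x in Hsqrt.
    assert (HN := pos_INR N); nra. }
  assert (0 < exp (INR N * x)) by apply exp_pos.
  nra.
Qed.

Lemma exists_nat_between r : 0 <= r -> exists K : nat, r < INR K <= r + 1.
Proof.
  intros Hr; destruct (archimed r) as [Hgt Hle].
  exists (Z.to_nat (up r)); rewrite INR_IZR_INZ, Znat.Z2Nat.id; [lra|].
  apply le_IZR; lra.
Qed.

Lemma ln2_pos : 0 < ln 2.
Proof. pose proof ln_lt_2; lra. Qed.

Definition growth_exponent (eps : R) : R := 6 * sqrt eps / ln 2.

Lemma Rpower_2_growth_exponent eps N :
  Rpower 2 (growth_exponent eps * N) = exp (3 * sqrt eps * N) ^ 2.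
Proof.
  pose proof ln2_pos; unfold Rpower, growth_exponent; simpl.
  rewrite Rmult_1_r, <- exp_plus; f_equal; field; lra.
Qed.

Lemma growth_exponent_pos eps : 0 < eps -> 0 < growth_exponent eps.
Proof.
  intros He; pose proof ln2_pos; pose proof (sqrt_lt_R0 eps He).
  unfold growth_exponent, Rdiv; apply Rmult_lt_0_compat; [lra|now apply Rinv_0_lt_compat].
Qed.

Lemma growth_exponent_vanishes d : 0 < d ->
  exists h, 0 < h /\ forall eps, 0 < eps < h -> growth_exponent eps < d.
Proof.
  intros Hd; pose proof ln2_pos.
  set (q := d * ln 2 / 6).
  assert (Hq : 0 < q) by (unfold q; apply Rdiv_lt_0_compat; nra).
  exists (q * q); split; [nra|]; intros eps [He Hh].
  assert (Hs : sqrt eps < q).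
  { rewrite <- (sqrt_square q) by lra; apply sqrt_lt_1_alt; lra. }
  unfold growth_exponent, q in *.
  apply (Rmult_lt_reg_r (ln 2)); [assumption|].
  replace (6 * sqrt eps / ln 2 * ln 2) with (6 * sqrt eps) by (field; lra); lra.
Qed.

Theorem lemma4p5 :
  exists f : R -> R,
    (forall eps, 0 < eps -> 0 < f eps) /\
    (forall d, 0 < d -> exists h, 0 < h /\ forall eps, 0 < eps < h -> f eps < d) /\
    (forall eps, 0 < eps ->
       exists C, 0 < C /\
         forall (n m : nat), (1 <= n)%nat -> (1 <= m)%nat ->
           forall s : list (list nat * list nat),
             NoDup s -> (forall p, In p s -> inFnm eps n m p) ->
             INR (length s) <= C * Rpower 2 (f eps * INR n)).
Proof.
  exists growth_exponent.
  split; [exact growth_exponent_pos|split; [exact growth_exponent_vanishes|]].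
  intros eps He.
  assert (Hmin : 0 < Rmin eps 1) by (apply Rmin_glb_lt; lra).
  exists ((/ Rmin eps 1) ^ 2); split; [apply pow_lt, Rinv_0_lt_compat, Hmin|].
  intros n m _ _ s Hnodup Hs.
  destruct (exists_nat_between (eps * INR n)) as [K [HKlo HKhi]].
  { apply Rmult_le_pos; [lra|apply pos_INR]. }
  assert (Hcount := length_inFnm_list_le eps n m K s Hnodup Hs HKlo).
  apply le_INR in Hcount; rewrite mult_INR, <- Rsqr_def, Rsqr_pow2 in Hcount.
  eapply Rle_trans; [exact Hcount|].
  rewrite Rpower_2_growth_exponent, <- Rpow_mult_distr.
  apply pow_incr; split; [apply pos_INR|].
  exact (length_increasing_lists_le_exp eps n K He HKhi).
Qed.
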